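(* For a weakly coupled POMDP and horizon $T$, the values of the Lagrangian relaxations (relaxing the linking constraints) of MILP (IP) and of the nonlinear program (UB) are equal; denoting this common value by $z_{\mathrm{LR}}$, $$z_{\mathrm{UB}}\le z_{\mathrm{LR}}\le z_{\mathrm R^{\mathrm c}}\le z_{\mathrm R}.$$
   Context: Weakly coupled POMDP: components $m\in[M]$, each a POMDP $(\mathcal X_S^m,\mathcal X_O^m,\mathcal X_A^m,\mathfrak p^m,\mathbf r^m)$ (initial $p^m(s)$, emissions $p^m(o|s)$, transitions $p^m(s'|s,a)$, reward $r^m$), $\mathbf D^m:\mathcal X_A^m\to\mathbb R^q$, $\mathbf b\in\mathbb R^q_{\ge0}$; full action space $\mathcal X_A=\{\mathbf a\in\prod_m\mathcal X_A^m:\sum_m\mathbf D^m(a^m)\le\mathbf b\}$ nonempty. For a POMDP, $\mathcal Q(T,\mathcal X_S,\mathcal X_O,\mathcal X_A,\mathfrak p)$: pairs $(\tau,\delta)$, $\delta^t_{a|o}\ge0$, $\sum_a\delta^t_{a|o}=1$, nonnegative $\tau$ with (i) $\tau^1_s=p(s)$; (ii) $\sum_{o,a}\tau^t_{soa}=\nu^t_s$, $\nu^1_s=\tau^1_s$, $\nu^t_s=\sum_{s'',a''}\tau^{t-1}_{s''a''s}$; (iii) $\sum_{\bar s}\tau^t_{sa\bar s}=\sum_o\tau^t_{soa}$; (iv) $\tau^t_{sas'}=p(s'|s,a)\sum_{\bar s}\tau^t_{sa\bar s}$; (v) $\tau^t_{soa}=\delta^t_{a|o}p(o|s)\sum_{o',a'}\tau^t_{so'a'}$.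 $\mathcal Q^{\mathrm d}$: same but $\delta^t_{a|o}\in\{0,1\}$ and (v) replaced by $\tau^t_{soa}\le p(o|s)\nu^t_s$, $\tau^t_{soa}\le\delta^t_{a|o}$, $\tau^t_{soa}\ge p(o|s)\nu^t_s+\delta^t_{a|o}-1$. (IP): maximize $\sum_t\sum_m\sum_{s,a,s'}r^m(s,a,s')\tau^{t,m}_{sas'}$ s.t. $(\tau^m,\delta^m)\in\mathcal Q^{\mathrm d}(T,\mathcal X_S^m,\mathcal X_O^m,\mathcal X_A^m,\mathfrak p^m)$, $\tau^{t,m}_a=\sum_{s,o}\tau^{t,m}_{soa}$, and linking constraints $\sum_m\sum_a\mathbf D^m(a)\tau^{t,m}_a\le\mathbf b$ ($t\in[T]$). (UB): same with $\mathcal Q$ in place of $\mathcal Q^{\mathrm d}$; value $z_{\mathrm{UB}}$. The Lagrangian relaxation of (IP) (resp. (UB)) is $\min_{\beta\in\mathbb R_+^{T\times q}}$ of the maximum, over the constraints other than the linking constraints, of $\sum_t\sum_m\sum_{s,a,s'}r^m(s,a,s')\tau^{t,m}_{sas'}+\sum_t(\beta^t)^\top(\mathbf b-\sum_m\sum_a\mathbf D^m(a)\tau^{t,m}_a)$. $z_{\mathrm R}$: value of the linear relaxation of (IP) ($\delta^{t,m}_{a|o}\in[0,1]$). $z_{\mathrm R^{\mathrm c}}$: value of that linear relaxation with, for each $m$ and $t\ge2$, additional nonnegative variables $\tau^{t,m}_{s'a'soa}$ and constraints $\sum_{s',a'}\tau^{t,m}_{s'a'soa}=\tau^{t,m}_{soa}$;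 $\sum_a\tau^{t,m}_{s'a'soa}=p^m(o|s)p^m(s|s',a')\sum_{\bar s}\tau^{t-1,m}_{s'a'\bar s}$; $\tau^{t,m}_{s'a'soa}=p^m(s|s',a',o)\sum_{\bar s}\tau^{t,m}_{s'a'\bar soa}$ with $p^m(s|s',a',o)=p^m(o|s)p^m(s|s',a')/\sum_{\bar s}p^m(o|\bar s)p^m(\bar s|s',a')$. *)

From HB Require Import structures.
From mathcomp Require Import all_boot all_order all_algebra.
From mathcomp Require Import boolp classical_sets reals.
Set Implicit Arguments.
Unset Strict Implicit.
Unset Printing Implicit Defensive.
Import Order.TTheory GRing.Theory Num.Theory.
Local Open Scope ring_scope.
Local Open Scope classical_set_scope.

Section Defs.
Variable R : realType.

(* A finite POMDP: p_init s = p(s), p_obs s o = p(o|s),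
   p_trans s a s' = p(s'|s,a), rew s a s' = r(s,a,s'). *)
Unset Implicit Arguments.
Record pomdp := Pomdp {
  St : finType; Ob : finType; Ac : finType;
  p_init : St -> R;
  p_obs : St -> Ob -> R;
  p_trans : St -> Ac -> St -> R;
  rew : St -> Ac -> St -> R }.
Set Implicit Arguments.

Definition pomdp_wf (P : pomdp) : Prop :=
  [/\ (forall s, 0 <= p_init P s) /\ \sum_s p_init P s = 1,
      (forall s o, 0 <= p_obs P s o) /\ (forall s, \sum_o p_obs P s o = 1) &
      (forall s a s', 0 <= p_trans P s a s') /\
      (forall s a, \sum_s' p_trans P s a s' = 1)].

(* Weakly coupled POMDP: components m in 'I_ncomp, resource vectors
   D^m(a) in R^nres (as functions 'I_nres -> R), budget b. *)
Unset Implicit Arguments.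
Record wcpomdp := WCPomdp {
  ncomp : nat;
  comp : 'I_ncomp -> pomdp;
  nres : nat;
  cons : forall m : 'I_ncomp, Ac (comp m) -> 'I_nres -> R;
  budget : 'I_nres -> R }.
Set Implicit Arguments.

Definition wcpomdp_wf (W : wcpomdp) : Prop :=
  [/\ (forall m, pomdp_wf (comp W m)),
      (forall k, 0 <= budget W k) &
      (* the full action space X_A is nonempty *)
      exists a : forall m, Ac (comp W m),
        forall k, \sum_(m < ncomp W) cons W m (a m) k <= budget W k].

(* Decision variables of one component. Time is a nat; index t (0-based)
   stands for the paper's time t+1; only t < T is constrained/used. *)
Record vars (P : pomdp) := Vars {
  x_soa : nat -> St P -> Ob P -> Ac P -> R;
  x_sas : nat -> St P -> Ac P -> St P -> R;
  x_del : nat -> Ob P -> Ac P -> R }.         (* delta^t_{a|o} *)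

(* nu^t_s, with nu^1_s = tau^1_s = p(s) (constraint (i) substituted). *)
Definition nu (P : pomdp) (x : vars P) (t : nat) (s : St P) : R :=
  if t is k.+1 then \sum_(s'' : St P) \sum_(a'' : Ac P) x_sas x k s'' a'' s
  else p_init P s.

(* constraints (i)-(iv), nonnegativity of tau, and sum_a delta = 1 *)
Definition base_feas (P : pomdp) (T : nat) (x : vars P) : Prop :=
  forall t, (t < T)%N ->
  [/\ (forall s o a, 0 <= x_soa x t s o a) /\
      (forall s a s', 0 <= x_sas x t s a s'),
      (forall o, \sum_a x_del x t o a = 1),
      (forall s, \sum_o \sum_a x_soa x t s o a = nu x t s),
      (forall s a, \sum_s' x_sas x t s a s' = \sum_o x_soa x t s o a) &
      (forall s a s', x_sas x t s a s' = p_trans P s a s' * \sum_sb x_sas x t s a sb)].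

Definition Q_feas (P : pomdp) (T : nat) (x : vars P) : Prop :=
  base_feas T x /\
  forall t, (t < T)%N ->
    (forall o a, 0 <= x_del x t o a) /\
    (forall s o a, x_soa x t s o a =
       x_del x t o a * p_obs P s o * \sum_o' \sum_a' x_soa x t s o' a').

Definition mccormick (P : pomdp) (T : nat) (x : vars P) : Prop :=
  forall t, (t < T)%N -> forall s o a,
    [/\ x_soa x t s o a <= p_obs P s o * nu x t s,
        x_soa x t s o a <= x_del x t o a &
        p_obs P s o * nu x t s + x_del x t o a - 1 <= x_soa x t s o a].

Definition Qd_feas (P : pomdp) (T : nat) (x : vars P) : Prop :=
  [/\ base_feas T x,
      (forall t, (t < T)%N -> forall o a, x_del x t o a = 0 \/ x_del x t o a = 1) &
      mccormick T x].

Definition QR_feas (P : pomdp) (T : nat) (x : vars P) : Prop :=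
  [/\ base_feas T x,
      (forall t, (t < T)%N -> forall o a, 0 <= x_del x t o a <= 1) &
      mccormick T x].

Definition pcond (P : pomdp) (s' : St P) (a' : Ac P) (o : Ob P) (s : St P) : R :=
  p_obs P s o * p_trans P s' a' s /
  \sum_(sb : St P) p_obs P sb o * p_trans P s' a' sb.

(* additional variables/constraints of R^c, for paper-times t >= 2
   (0-based 1 <= t < T); xi t s' a' s o a = tau^t_{s'a'soa}. *)
Definition Rc_extra (P : pomdp) (T : nat) (x : vars P)
    (xi : nat -> St P -> Ac P -> St P -> Ob P -> Ac P -> R) : Prop :=
  forall t, (0 < t)%N -> (t < T)%N ->
  [/\ (forall s' a' s o a, 0 <= xi t s' a' s o a),
      (forall s o a, \sum_s' \sum_a' xi t s' a' s o a = x_soa x t s o a),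
      (forall s' a' s o, \sum_a xi t s' a' s o a =
          p_obs P s o * p_trans P s' a' s * \sum_sb x_sas x t.-1 s' a' sb) &
      (forall s' a' s o a, xi t s' a' s o a =
          pcond s' a' o s * \sum_sb xi t s' a' sb o a)].

Definition Rc_feas (P : pomdp) (T : nat) (x : vars P) : Prop :=
  QR_feas T x /\ exists xi, Rc_extra T x xi.

Section Programs.
Variable W : wcpomdp.
Variable T : nat.

Definition jvars := forall m : 'I_(ncomp W), vars (comp W m).

Definition objective (X : jvars) : R :=
  \sum_(t < T) \sum_(m < ncomp W) \sum_(s : St (comp W m)) \sum_(a : Ac (comp W m))
    \sum_(s' : St (comp W m)) rew (comp W m) s a s' * x_sas (X m) t s a s'.

Definition usage (X : jvars) (t : nat) (k : 'I_(nres W)) : R :=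
  \sum_(m < ncomp W) \sum_(a : Ac (comp W m))
    cons W m a k * (\sum_(s : St (comp W m)) \sum_(o : Ob (comp W m)) x_soa (X m) t s o a).

Definition linking (X : jvars) : Prop :=
  forall t, (t < T)%N -> forall k, usage X t k <= budget W k.

Definition comp_feas (F : forall P : pomdp, nat -> vars P -> Prop) (X : jvars) : Prop :=
  forall m, F (comp W m) T (X m).

Definition prog_value (F : forall P : pomdp, nat -> vars P -> Prop) : R :=
  sup [set v | exists X : jvars, [/\ comp_feas F X, linking X & v = objective X]].

Definition lagrangian (F : forall P : pomdp, nat -> vars P -> Prop)
    (beta : nat -> 'I_(nres W) -> R) : R :=
  sup [set v | exists X : jvars, comp_feas F X /\
        v = objective X + \sum_(t < T) \sum_(k < nres W)
                            beta t k * (budget W k - usage X t k)].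

Definition lagrangian_value (F : forall P : pomdp, nat -> vars P -> Prop) : R :=
  inf [set v | exists beta : nat -> 'I_(nres W) -> R,
                 (forall t k, 0 <= beta t k) /\ v = lagrangian F beta].

Definition z_UB := prog_value Q_feas.
Definition z_R := prog_value QR_feas.
Definition z_Rc := prog_value Rc_feas.
Definition z_LR_IP := lagrangian_value Qd_feas.
Definition z_LR_UB := lagrangian_value Q_feas.

End Programs.
End Defs.

From Pilot Require Import Defs.
From HB Require Import structures.
From mathcomp Require Import all_boot all_order all_algebra.
From mathcomp Require Import boolp classical_sets reals.
From mathcomp Require Import ring lra.
Import Order.TTheory GRing.Theory Num.Theory.
Local Open Scope ring_scope.

(* 1. For one POMDP, every point of Q (the nonlinear program) is the vector
      of occupancy measures [occ_soa], [occ_sas] of its own randomised policy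
      [delta], and conversely; deterministic policies give points of Q^d,
      which in turn lie in the linear relaxation R^c, a convex set.
   2. The occupancy measures of a policy are the average, weighted by
      [delta^t_{.|o}], of those of the policies fixing the action after
      observation [o] at time [t].  The Lagrangian is affine in the
      occupancy measures, so every decision point can be derandomised
      without decreasing it: the Lagrangians of (IP) and (UB) coincide.
   3. Weak duality gives [z_UB <= z_LR]; R^c restricts R, so [z_Rc <= z_R].
   4. For [z_LR <= z_Rc], map joint points to (objective, linking slacks).
      The image of R^c is convex and the Lagrangian of (IP) is attained at
      the finitely many deterministic policies; finite Lagrangian duality,
      proved by Fourier-Motzkin elimination, yields multipliers bounding
      all of them by [z_Rc]. *)

Section Sums.
Context {R : numDomainType}.

Lemma ler_sum_term (I : finType) (F : I -> R) j :
  (forall i, 0 <= F i) -> F j <= \sum_i F i.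
Proof. by move=> F_ge0; rewrite (bigD1 j) //= lerDl sumr_ge0. Qed.

Lemma sumr_mul_exchange (I J : finType) (w : I -> R) (F : I -> J -> R) :
  \sum_i w i * \sum_j F i j = \sum_j \sum_i w i * F i j.
Proof. by under eq_bigr do rewrite mulr_sumr; exact: exchange_big. Qed.

Lemma sumr_mulCA (I : finType) (w F : I -> R) c :
  \sum_i w i * (c * F i) = c * \sum_i w i * F i.
Proof. by rewrite mulr_sumr; apply: eq_bigr => i _; rewrite mulrCA. Qed.

Lemma sumr_convex (I : finType) (F G : I -> R) mu :
  \sum_i (mu * F i + (1 - mu) * G i) = mu * \sum_i F i + (1 - mu) * \sum_i G i.
Proof. by rewrite big_split /= -!mulr_sumr. Qed.

End Sums.

(* Rescaling by a normalised nonnegative weight: if [w >= 0] then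
   [c * w s = (w s / \sum w) * \sum_sb c * w sb], also when [\sum w = 0]. *)
Lemma mul_normalized_weight {R : realFieldType} {I : finType} (w : I -> R) c s :
  (forall i, 0 <= w i) -> c * w s = w s / (\sum_i w i) * \sum_i c * w i.
Proof.
move=> w_ge0; rewrite -mulr_sumr.
have [sum0|sumN0] := eqVneq (\sum_i w i) 0; last by field.
suff -> : w s = 0 by rewrite !(mulr0, mul0r).
by apply/eqP; rewrite eq_le w_ge0 andbT -sum0 ler_sum_term.
Qed.

Section Pomdp.
Context {R : realType} {P : pomdp R}.
Hypothesis wf : pomdp_wf P.

Local Notation p0 := (p_init R P).
Local Notation pobs := (p_obs R P).
Local Notation ptr := (p_trans R P).

Lemma init_ge0 s : 0 <= p0 s. Proof. by case: wf => [[]]. Qed.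
Lemma init_sum : \sum_s p0 s = 1. Proof. by case: wf => [[]]. Qed.
Lemma obs_ge0 s o : 0 <= pobs s o. Proof. by case: wf => _ []. Qed.
Lemma obs_sum s : \sum_o pobs s o = 1. Proof. by case: wf => _ []. Qed.
Lemma trans_ge0 s a s' : 0 <= ptr s a s'. Proof. by case: wf => _ _ []. Qed.
Lemma trans_sum s a : \sum_s' ptr s a s' = 1. Proof. by case: wf => _ _ []. Qed.

Lemma obs_le1 s o : pobs s o <= 1.
Proof. by rewrite -(obs_sum s) ler_sum_term // => o'; exact: obs_ge0. Qed.

Section BaseFeasible.
Context {T : nat} {x : vars P}.
Hypothesis xB : base_feas T x.

Lemma soa_ge0 t s o a : (t < T)%N -> 0 <= x_soa x t s o a.
Proof. by move=> /xB [[]]. Qed.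

Lemma sas_ge0 t s a s' : (t < T)%N -> 0 <= x_sas x t s a s'.
Proof. by move=> /xB [[]]. Qed.

Lemma nu_ge0 t s : (t < T)%N -> 0 <= nu x t s.
Proof.
case: t => [|t] tT /=; first exact: init_ge0.
by do 2 (apply: sumr_ge0 => ? _); apply: sas_ge0; exact: ltnW.
Qed.

(* Conservation of mass: [nu (t+1)] is the image of [nu t] by one step. *)
Lemma nu_sum t : (t < T)%N -> \sum_s nu x t s = 1.
Proof.
elim: t => [|t IH] tT /=; first exact: init_sum.
have tT' : (t < T)%N by exact: ltnW.
have [_ _ soa_nu sas_soa _] := xB t tT'.
rewrite exchange_big /= -(IH tT'); apply: eq_bigr => s _.
by rewrite -soa_nu exchange_big [RHS]exchange_big /=; apply: eq_bigr => a _; rewrite sas_soa.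
Qed.

Lemma nu_le1 t s : (t < T)%N -> nu x t s <= 1.
Proof.
by move=> tT; rewrite -(nu_sum t tT) ler_sum_term // => s'; exact: nu_ge0.
Qed.

Lemma soa_le_nu t s o a : (t < T)%N -> x_soa x t s o a <= nu x t s.
Proof.
move=> tT; have [_ _ soa_nu _ _] := xB t tT; rewrite -soa_nu.
apply: (le_trans (y := \sum_a x_soa x t s o a)).
  by rewrite ler_sum_term // => a'; exact: soa_ge0.
by rewrite ler_sum_term // => o'; apply: sumr_ge0 => a' _; exact: soa_ge0.
Qed.

Lemma soa_le1 t s o a : (t < T)%N -> x_soa x t s o a <= 1.
Proof. by move=> tT; exact: le_trans (soa_le_nu t s o a tT) (nu_le1 t s tT). Qed.

Lemma sas_le1 t s a s' : (t < T)%N -> x_sas x t s a s' <= 1.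
Proof.
move=> tT; have [_ _ soa_nu sas_soa _] := xB t tT.
apply: le_trans (_ : \sum_s'' x_sas x t s a s'' <= 1).
  by rewrite ler_sum_term // => s''; exact: sas_ge0.
rewrite sas_soa; apply: le_trans (nu_le1 t s tT).
rewrite -soa_nu exchange_big /= ler_sum_term // => a'.
by apply: sumr_ge0 => o _; exact: soa_ge0.
Qed.

End BaseFeasible.

(* The occupancy measures of a (randomised, observation-based) policy
   [d t o a = delta^t_{a|o}]: state occupancy [occ], and the induced
   [tau_soa] and [tau_sas]. *)
Fixpoint occ (d : nat -> Ob R P -> Ac R P -> R) (t : nat) (s : St R P) : R :=
  if t is t'.+1 then
    \sum_s'' \sum_a'' ptr s'' a'' s * \sum_o d t' o a'' * pobs s'' o * occ d t' s''
  else p0 s.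

Definition occ_soa d t s o a := d t o a * pobs s o * occ d t s.
Definition occ_sas d t s a s' := ptr s a s' * \sum_o occ_soa d t s o a.
Definition occ_vars d : vars P := Vars (occ_soa d) (occ_sas d) d.

Lemma nu_occ_vars d t s : nu (occ_vars d) t s = occ d t s.
Proof. by case: t. Qed.

Definition stoch (T : nat) (d : nat -> Ob R P -> Ac R P -> R) :=
  forall t, (t < T)%N -> (forall o a, 0 <= d t o a) /\ (forall o, \sum_a d t o a = 1).

Section Occupancy.
Context {T : nat} {d : nat -> Ob R P -> Ac R P -> R}.
Hypothesis dS : stoch T d.

Lemma pol_ge0 t o a : (t < T)%N -> 0 <= d t o a.
Proof. by move=> /dS []. Qed.

Lemma pol_sum t o : (t < T)%N -> \sum_a d t o a = 1.
Proof. by move=> /dS []. Qed.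

Lemma pol_le1 t o a : (t < T)%N -> d t o a <= 1.
Proof.
by move=> tT; rewrite -(pol_sum t o tT) ler_sum_term // => a'; exact: pol_ge0.
Qed.

Lemma occ_ge0 t s : (t < T)%N -> 0 <= occ d t s.
Proof.
elim: t s => [|t IH] s tT /=; first exact: init_ge0.
do 2 (apply: sumr_ge0 => ? _); rewrite mulr_ge0 ?trans_ge0 //.
apply: sumr_ge0 => o _; rewrite !mulr_ge0 ?pol_ge0 ?obs_ge0 ?IH //; exact: ltnW.
Qed.

Lemma occ_soa_ge0 t s o a : (t < T)%N -> 0 <= occ_soa d t s o a.
Proof. by move=> tT; rewrite !mulr_ge0 ?pol_ge0 ?obs_ge0 ?occ_ge0. Qed.

Lemma occ_soa_sum t s : (t < T)%N -> \sum_o \sum_a occ_soa d t s o a = occ d t s.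
Proof.
move=> tT; transitivity (\sum_o pobs s o * occ d t s); last first.
  by rewrite -mulr_suml obs_sum mul1r.
apply: eq_bigr => o _; under eq_bigr do rewrite /occ_soa -mulrA.
by rewrite -mulr_suml pol_sum // mul1r.
Qed.

Lemma occ_sas_sum t s a : \sum_s' occ_sas d t s a s' = \sum_o occ_soa d t s o a.
Proof. by rewrite -mulr_suml trans_sum mul1r. Qed.

Lemma occ_sum t : (t < T)%N -> \sum_s occ d t s = 1.
Proof.
elim: t => [|t IH] tT /=; first exact: init_sum.
have tT' : (t < T)%N by exact: ltnW.
rewrite exchange_big /= -(IH tT'); apply: eq_bigr => s _.
rewrite -[RHS]occ_soa_sum // exchange_big [RHS]exchange_big /=.
by apply: eq_bigr => a _; rewrite -mulr_suml trans_sum mul1r.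
Qed.

Lemma occ_action_marginal t a c : (t < T)%N -> (forall o, d t o a = c) ->
  \sum_s \sum_o occ_soa d t s o a = c.
Proof.
move=> tT d_c; transitivity (\sum_s c * occ d t s); last first.
  by rewrite -mulr_sumr occ_sum // mulr1.
apply: eq_bigr => s _; under eq_bigr do rewrite /occ_soa d_c -mulrA.
by rewrite -mulr_sumr -mulr_suml obs_sum mul1r.
Qed.

Lemma occ_le1 t s : (t < T)%N -> occ d t s <= 1.
Proof.
by move=> tT; rewrite -(occ_sum t tT) ler_sum_term // => s'; exact: occ_ge0.
Qed.

Lemma occ_base : base_feas T (occ_vars d).
Proof.
move=> t tT; split => /=.
- split=> s o a *; first exact: occ_soa_ge0.
  by rewrite mulr_ge0 ?trans_ge0 // sumr_ge0 // => o' _; exact: occ_soa_ge0.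
- by move=> o; exact: pol_sum.
- by move=> s; rewrite nu_occ_vars occ_soa_sum.
- by move=> s a; rewrite occ_sas_sum.
- by move=> s a s'; rewrite occ_sas_sum.
Qed.

Lemma occ_Q : Q_feas T (occ_vars d).
Proof.
split; first exact: occ_base.
by move=> t tT; split=> [o a|s o a] /=; [exact: pol_ge0 | rewrite occ_soa_sum].
Qed.

(* The McCormick inequalities hold since [d t o a] and [p(o|s) occ t s]
   both lie in [0, 1] and [tau_soa] is their product. *)
Lemma occ_mccormick : mccormick T (occ_vars d).
Proof.
move=> t tT s o a; rewrite /= nu_occ_vars /occ_soa -mulrA.
have := pol_ge0 t o a tT; have := pol_le1 t o a tT.
have q_ge0 : 0 <= pobs s o * occ d t s by rewrite mulr_ge0 ?obs_ge0 ?occ_ge0.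
have q_le1 : pobs s o * occ d t s <= 1.
  by rewrite -(mulr1 1) ler_pM ?obs_ge0 ?occ_ge0 ?obs_le1 ?occ_le1.
move: q_ge0 q_le1; set q := pobs s o * occ d t s => *.
by split; nra.
Qed.

End Occupancy.

Lemma occ_Qd T d : stoch T d ->
  (forall t o a, (t < T)%N -> d t o a = 0 \/ d t o a = 1) -> Qd_feas T (occ_vars d).
Proof.
by move=> dS d01; split; [exact: occ_base | move=> t tT o a; exact: d01 |
  exact: occ_mccormick].
Qed.

Section QPoint.
Context {T : nat} {x : vars P}.
Hypothesis xQ : Q_feas T x.

Lemma Q_policy_stoch : stoch T (x_del x).
Proof.
by case: xQ => xB xD t tT; split; [case: (xD t tT) | case: (xB t tT)].
Qed.

Lemma Q_soa t s o a : (t < T)%N ->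
  x_soa x t s o a = x_del x t o a * pobs s o * nu x t s.
Proof. by case: xQ => xB xD tT; case: (xD t tT) => _ ->; case: (xB t tT) => _ _ ->. Qed.

Lemma Q_sas t s a s' : (t < T)%N ->
  x_sas x t s a s' = ptr s a s' * \sum_o x_soa x t s o a.
Proof. by case: xQ => xB _ tT; case: (xB t tT) => _ _ _ <- ->. Qed.

Lemma Q_nu t s : (t < T)%N -> nu x t s = occ (x_del x) t s.
Proof.
elim: t s => [|t IH] s tT //=; have tT' : (t < T)%N by exact: ltnW.
do 2 (apply: eq_bigr => ? _); rewrite Q_sas //; congr (_ * _).
by apply: eq_bigr => o _; rewrite Q_soa // IH.
Qed.

Lemma Q_soa_occ t s o a : (t < T)%N -> x_soa x t s o a = occ_soa (x_del x) t s o a.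
Proof. by move=> tT; rewrite Q_soa // Q_nu. Qed.

Lemma Q_sas_occ t s a s' : (t < T)%N -> x_sas x t s a s' = occ_sas (x_del x) t s a s'.
Proof.
by move=> tT; rewrite Q_sas //; congr (_ * _); apply: eq_bigr => o _; rewrite Q_soa_occ.
Qed.

End QPoint.

Lemma occ_prefix d1 d2 t : (forall t', (t' < t)%N -> d1 t' = d2 t') ->
  forall s, occ d1 t s = occ d2 t s.
Proof.
elim: t => [|t IH] d12 s //=; have IH' := IH (fun t' t't => d12 t' (ltnW t't)).
do 2 (apply: eq_bigr => ? _); congr (_ * _).
by apply: eq_bigr => o _; rewrite IH' d12.
Qed.

Lemma occ_agree {T d1 d2} : (forall t, (t < T)%N -> d1 t = d2 t) ->
  forall t, (t < T)%N ->
  (forall s o a, occ_soa d1 t s o a = occ_soa d2 t s o a) /\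
  (forall s a s', occ_sas d1 t s a s' = occ_sas d2 t s a s').
Proof.
move=> d12 t tT.
have soa12 s o a : occ_soa d1 t s o a = occ_soa d2 t s o a.
  rewrite /occ_soa d12 // (occ_prefix d1 d2) // => t' t't.
  by apply: d12; exact: ltn_trans t't tT.
by split=> // s a s'; rewrite /occ_sas; congr (_ * _); apply: eq_bigr.
Qed.

Definition fix_action (d : nat -> Ob R P -> Ac R P -> R) t o a :=
  fun t' o' a' => if (t' == t) && (o' == o) then (a' == a)%:R else d t' o' a'.

Lemma fix_action_stoch T d t o a : stoch T d -> stoch T (fix_action d t o a).
Proof.
move=> dS t' t'T; have [d_ge0 d_sum] := dS t' t'T; split=> [o' a'|o'].
  by rewrite /fix_action; case: ifP => _ //; exact: ler0n.
rewrite /fix_action; case: (_ && _); last exact: d_sum.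
by rewrite (bigD1 a) //= eqxx big1 ?addr0 // => a' /negPf ->.
Qed.

(* Randomisation at one decision point is a mixture of deterministic choices:
   the occupancy measures of [d] are the [d t o]-weighted average of those of
   the policies [fix_action d t o a]. *)
Section Mixture.
Context {d : nat -> Ob R P -> Ac R P -> R} {t : nat} {o : Ob R P}.
Hypothesis d_sum : \sum_a d t o a = 1.

Lemma mix_fix_action t' o' a' :
  \sum_a d t o a * fix_action d t o a t' o' a' = d t' o' a'.
Proof.
rewrite /fix_action; case: andP => [[/eqP -> /eqP ->]|_].
  by rewrite (bigD1 a') //= eqxx mulr1 big1 ?addr0 // => a /negPf;
    rewrite eq_sym => ->; rewrite mulr0.
by rewrite -mulr_suml d_sum mul1r.
Qed.

(* The average of [policy entry * occupancy] at time [t']: if [t' <= t] the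
   occupancy at [t'] does not see the fixed action, if [t' > t] the policy
   entry at [t'] does not, so in both cases the average factors. *)
Lemma mix_pol_occ t' o' a' s :
  (forall s, \sum_a d t o a * occ (fix_action d t o a) t' s = occ d t' s) ->
  \sum_a d t o a * (fix_action d t o a t' o' a' * occ (fix_action d t o a) t' s) =
  d t' o' a' * occ d t' s.
Proof.
move=> occ_mix; case: (leqP t' t) => t't.
  have occ_eq a : occ (fix_action d t o a) t' s = occ d t' s.
    apply: occ_prefix => t'' t''t; apply/funext => o1; apply/funext => a1.
    by rewrite /fix_action ltn_eqF // (leq_trans t''t).
  by under eq_bigr do rewrite occ_eq mulrA; rewrite -mulr_suml mix_fix_action.
have pol_eq a : fix_action d t o a t' o' a' = d t' o' a'.
  by rewrite /fix_action gtn_eqF.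
by under eq_bigr do rewrite pol_eq mulrCA; rewrite -mulr_sumr occ_mix.
Qed.

Lemma occ_mix_fix t' s : \sum_a d t o a * occ (fix_action d t o a) t' s = occ d t' s.
Proof.
elim: t' s => [|t' IH] s /=; first by rewrite -mulr_suml d_sum mul1r.
rewrite sumr_mul_exchange; apply: eq_bigr => s1 _.
rewrite sumr_mul_exchange; apply: eq_bigr => a1 _.
rewrite sumr_mulCA sumr_mul_exchange; congr (_ * _); apply: eq_bigr => o1 _.
rewrite [RHS]mulrAC -(mix_pol_occ t' o1 a1 s1 IH) mulr_suml.
by apply: eq_bigr => a _; ring.
Qed.

Lemma occ_soa_mix_fix t' s o' a' :
  \sum_a d t o a * occ_soa (fix_action d t o a) t' s o' a' = occ_soa d t' s o' a'.
Proof.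
rewrite /occ_soa [RHS]mulrAC -(mix_pol_occ t' o' a' s (occ_mix_fix t')) mulr_suml.
by apply: eq_bigr => a _; ring.
Qed.

Lemma occ_sas_mix_fix t' s a' s' :
  \sum_a d t o a * occ_sas (fix_action d t o a) t' s a' s' = occ_sas d t' s a' s'.
Proof.
rewrite /occ_sas sumr_mulCA sumr_mul_exchange; congr (_ * _).
by apply: eq_bigr => o1 _; exact: occ_soa_mix_fix.
Qed.

End Mixture.

(* Q^d is contained in Q: with [delta] in {0, 1} the McCormick inequalities
   force [tau_soa = delta p(o|s) nu]. *)
Lemma Qd_Q {T} {x : vars P} : Qd_feas T x -> Q_feas T x.
Proof.
move=> [xB x01 xM]; split => // t tT; split=> [o a|s o a].
  by case: (x01 t tT o a) => ->.
have [_ _ soa_nu _ _] := xB t tT; rewrite soa_nu.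
have [m1 m2 m3] := xM t tT s o a; have := soa_ge0 xB t s o a tT.
move: m1 m2 m3; set q := pobs s o * nu x t s.
by case: (x01 t tT o a) => -> *; rewrite ?mul0r ?mul1r -/q; lra.
Qed.

(* Points of Q^d satisfy the linear relaxation with the extra variables
   [tau^t_{s'a'soa} = delta^t_{a|o} p(o|s) p(s|s',a') tau^{t-1}_{s'a'}]. *)
Lemma Qd_Rc {T} {x : vars P} : Qd_feas T x -> Rc_feas T x.
Proof.
move=> xD; have xQ := Qd_Q xD; case: xD => xB x01 xM.
split; first by split=> // t tT o a; case: (x01 t tT o a) => ->; rewrite ?lexx ?ler01.
have x_del_ge0 t o a : (t < T)%N -> 0 <= x_del x t o a.
  by move=> tT; case: (x01 t tT o a) => ->.
exists (fun t s' a' s o a => x_del x t o a * pobs s o *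
   (ptr s' a' s * \sum_sb x_sas x t.-1 s' a' sb)).
case=> [//|t] _ tT /=; have tT' : (t < T)%N by exact: ltnW.
have [_ del_sum _ _ _] := xB t.+1 tT.
split.
- move=> s' a' s o a; rewrite !mulr_ge0 ?x_del_ge0 ?obs_ge0 ?trans_ge0 //.
  by apply: sumr_ge0 => sb _; exact: sas_ge0 xB _ _ _ _ tT'.
- move=> s o a; rewrite (Q_soa xQ) //= mulr_sumr; apply: eq_bigr => s1 _.
  rewrite mulr_sumr; apply: eq_bigr => a1 _; congr (_ * _).
  by have [_ _ _ _ ->] := xB t tT'.
- by move=> s' a' s o; rewrite -!mulr_suml del_sum mul1r; ring.
- move=> s' a' s o a; rewrite /pcond.
  set K := \sum_sb x_sas x t s' a' sb.
  transitivity (x_del x t.+1 o a * K * (pobs s o * ptr s' a' s)); first by ring.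
  rewrite (mul_normalized_weight (fun sb => pobs sb o * ptr s' a' sb)).
    by congr (_ * _); apply: eq_bigr => sb _; ring.
  by move=> sb; rewrite mulr_ge0 ?obs_ge0 ?trans_ge0.
Qed.

Definition vcomb (mu : R) (x y : vars P) : vars P :=
  Vars (fun t s o a => mu * x_soa x t s o a + (1 - mu) * x_soa y t s o a)
       (fun t s a s' => mu * x_sas x t s a s' + (1 - mu) * x_sas y t s a s')
       (fun t o a => mu * x_del x t o a + (1 - mu) * x_del y t o a).

Lemma nu_vcomb mu x y t s : nu (vcomb mu x y) t s = mu * nu x t s + (1 - mu) * nu y t s.
Proof. by case: t => [|t] /=; [ring | under eq_bigr do rewrite sumr_convex; rewrite sumr_convex]. Qed.

Section Convexity.
Context {T : nat} {mu : R}.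
Hypothesis mu01 : 0 <= mu <= 1.

Lemma convex_ge0 a b : 0 <= a -> 0 <= b -> 0 <= mu * a + (1 - mu) * b.
Proof. by case/andP: mu01 => *; rewrite addr_ge0 ?mulr_ge0 ?subr_ge0. Qed.

Lemma convex_le a b c : a <= c -> b <= c -> mu * a + (1 - mu) * b <= c.
Proof. by case/andP: mu01 => *; nra. Qed.

Lemma base_feas_convex x y : base_feas T x -> base_feas T y -> base_feas T (vcomb mu x y).
Proof.
move=> xB yB t tT; have [[x0 x0'] x1 x2 x3 x4] := xB t tT.
have [[y0 y0'] y1 y2 y3 y4] := yB t tT; split => /=.
- by split=> *; apply: convex_ge0.
- by move=> o; rewrite sumr_convex x1 y1; ring.
- move=> s; rewrite nu_vcomb -x2 -y2 -sumr_convex.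
  by apply: eq_bigr => o _; rewrite sumr_convex.
- by move=> s a; rewrite sumr_convex x3 y3 -sumr_convex.
- by move=> s a s'; rewrite sumr_convex x4 y4; ring.
Qed.

Lemma QR_feas_convex x y : QR_feas T x -> QR_feas T y -> QR_feas T (vcomb mu x y).
Proof.
case/andP: mu01 => mu0 mu1 [xB xD xM] [yB yD yM].
split; first exact: base_feas_convex.
- move=> t tT o a; have /andP [? ?] := xD t tT o a; have /andP [? ?] := yD t tT o a.
  by rewrite convex_ge0 ?convex_le.
- move=> t tT s o a; have [x1 x2 x3] := xM t tT s o a; have [y1 y2 y3] := yM t tT s o a.
  rewrite /= nu_vcomb; have mu1' : 0 <= 1 - mu by rewrite subr_ge0.
  have := ler_wpM2l mu0 x1; have := ler_wpM2l mu1' y1.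
  have := ler_wpM2l mu0 x2; have := ler_wpM2l mu1' y2.
  have := ler_wpM2l mu0 x3; have := ler_wpM2l mu1' y3.
  by move=> *; split; lra.
Qed.

Lemma Rc_feas_convex x y : Rc_feas T x -> Rc_feas T y -> Rc_feas T (vcomb mu x y).
Proof.
move=> [xR [xi1 ex]] [yR [xi2 ey]]; split; first exact: QR_feas_convex.
exists (fun t s' a' s o a => mu * xi1 t s' a' s o a + (1 - mu) * xi2 t s' a' s o a).
move=> t t0 tT; have [e1 e2 e3 e4] := ex t t0 tT; have [f1 f2 f3 f4] := ey t t0 tT.
split => /=.
- by move=> *; apply: convex_ge0.
- move=> s o a; rewrite -e2 -f2 -sumr_convex.
  by apply: eq_bigr => s1 _; rewrite sumr_convex.
- by move=> s' a' s o; rewrite sumr_convex e3 f3 sumr_convex; ring.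
- by move=> s' a' s o a; rewrite e4 f4 sumr_convex; ring.
Qed.

End Convexity.

End Pomdp.

(* Finite Lagrangian duality, proved by Fourier-Motzkin elimination. *)
Section Multipliers.
Context {R : realFieldType}.

(* One multiplier for one constraint: given finitely many pairs [(u p, g p)]
   with [u p <= 0] whenever [g p >= 0], and [u <= 0] at the combination of
   any [p] with [g p > 0] and [q] with [g q < 0] that cancels [g] (that is,
   [g p * u q <= g q * u p]), some [lam >= 0] makes [u + lam g <= 0]
   everywhere: take the largest ratio [u q / - g q] over [g q < 0]. *)
Lemma scalar_multiplier {X : eqType} (s : seq X) (u g : X -> R) :
  (forall p, p \in s -> 0 <= g p -> u p <= 0) ->
  (forall p q, p \in s -> q \in s -> 0 < g p -> g q < 0 -> g p * u q <= g q * u p) ->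
  exists2 lam, 0 <= lam & forall p, p \in s -> u p + lam * g p <= 0.
Proof.
move=> u_nn u_mix.
pose lam := \big[Order.max/0]_(q <- s | g q < 0) (u q / - g q).
exists lam => [|p ps]; first exact: bigmax_ge_id.
have [gp_lt0|gp_gt0|gp0] := ltrgtP (g p) 0; last by rewrite gp0 mulr0 addr0 u_nn ?gp0.
- have : u p / - g p <= lam.
    exact: (le_bigmax_seq 0 p (fun q => g q < 0) (fun q => u q / - g q)).
  by rewrite ler_pdivrMr ?oppr_gt0 // mulrN; lra.
- have lam_le : lam <= - u p / g p.
    rewrite /lam big_seq_cond; apply: bigmax_le => [|q /andP [qs gq_lt0]].
      by rewrite divr_ge0 ?(ltW gp_gt0) // oppr_ge0 u_nn // ltW.
    have := u_mix p q ps qs gp_gt0 gq_lt0.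
    by rewrite ler_pdivrMr ?oppr_gt0 // mulrAC ler_pdivlMr //; nra.
  have := ler_wpM2r (ltW gp_gt0) lam_le.
  by rewrite divfK ?gt_eqF //; lra.
Qed.

Context {J : finType}.

(* Points [(value, slacks)] and their convex combinations. *)
Definition pt := (R * {ffun J -> R})%type.

Definition combp (mu : R) (p q : pt) : pt :=
  (mu * p.1 + (1 - mu) * q.1, [ffun j => mu * p.2 j + (1 - mu) * q.2 j]).

Definition convexS (S : pt -> Prop) :=
  forall p q mu, S p -> S q -> 0 <= mu <= 1 -> S (combp mu p q).

Definition lagr (c : J -> R) (ks : seq J) (p : pt) : R :=
  p.1 + \sum_(k <- ks) c k * p.2 k.

Lemma lagr_combp c ks mu p q :
  lagr c ks (combp mu p q) = mu * lagr c ks p + (1 - mu) * lagr c ks q.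
Proof.
rewrite /lagr /=; under eq_bigr do rewrite ffunE mulrDr mulrCA [X in _ + X]mulrCA.
by rewrite big_split /= -!mulr_sumr; ring.
Qed.

(* The combination of [p] ([g p > 0]) and [q] ([g q < 0]) cancelling [g]. *)
Definition cancel_mix j (p q : pt) := combp (- q.2 j / (p.2 j - q.2 j)) p q.

Lemma cancel_mix_weight j (p q : pt) : 0 < p.2 j -> q.2 j < 0 ->
  0 <= - q.2 j / (p.2 j - q.2 j) <= 1.
Proof.
move=> gp gq; have gpq : 0 < p.2 j - q.2 j by lra.
by rewrite divr_ge0 ?ler_pdivrMr //=; lra.
Qed.

Lemma cancel_mix_slack j (p q : pt) : 0 < p.2 j -> q.2 j < 0 ->
  (cancel_mix j p q).2 j = 0.
Proof. by move=> gp gq; rewrite /= ffunE; field; rewrite gt_eqF //; lra. Qed.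

Lemma lagr_cancel_mix c ks j (p q : pt) : 0 < p.2 j -> q.2 j < 0 ->
  (p.2 j - q.2 j) * lagr c ks (cancel_mix j p q) =
  p.2 j * lagr c ks q - q.2 j * lagr c ks p.
Proof. by move=> gp gq; rewrite lagr_combp; field; rewrite gt_eqF //; lra. Qed.

Lemma convexS_slack_ge0 S j : convexS S -> convexS (fun p => S p /\ 0 <= p.2 j).
Proof.
move=> S_cvx p q mu [Sp p0] [Sq q0] mu01; split; first exact: S_cvx.
by case/andP: mu01 => *; rewrite ffunE addr_ge0 ?mulr_ge0 ?subr_ge0.
Qed.

(* Fourier-Motzkin elimination of constraint [j]: keep the points with
   nonnegative slack [j] and add all the cancelling combinations. *)
Definition eliminate (j : J) (pts : seq pt) : seq pt :=
  [seq p : pt <- pts | 0 <= p.2 j] ++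
  [seq cancel_mix j p q | p <- [seq p : pt <- pts | 0 < p.2 j],
                          q <- [seq p : pt <- pts | p.2 j < 0]].

Lemma eliminate_in {S} j {pts : seq pt} : convexS S -> (forall p, p \in pts -> S p) ->
  forall p, p \in eliminate j pts -> S p /\ 0 <= p.2 j.
Proof.
move=> S_cvx ptsS p; rewrite mem_cat => /orP [|/allpairsP [[p1 q1] [/= p1in q1in ->]]].
  by rewrite mem_filter => /andP [p0 pin]; split=> //; exact: ptsS.
move: p1in q1in; rewrite !mem_filter => /andP [gp p1in] /andP [gq q1in].
split; last by rewrite cancel_mix_slack.
by apply: S_cvx; [exact: ptsS | exact: ptsS | exact: cancel_mix_weight].
Qed.

Lemma eliminate_nonneg j (pts : seq pt) (p : pt) : p \in pts -> 0 <= p.2 j -> p \in eliminate j pts.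
Proof. by move=> pin p0; rewrite mem_cat mem_filter pin p0. Qed.

Lemma eliminate_mix j {pts : seq pt} {p q : pt} : p \in pts -> q \in pts -> 0 < p.2 j -> q.2 j < 0 ->
  cancel_mix j p q \in eliminate j pts.
Proof.
move=> pin qin gp gq; rewrite mem_cat; apply/orP; right; apply/allpairsP.
by exists (p, q); rewrite /= !mem_filter gp gq pin qin.
Qed.

(* By induction on [ks]: multipliers for the other constraints come from the
   eliminated point set, and the one for [j] from [scalar_multiplier]. *)
Lemma finite_lagrange_duality {ks : seq J} {S : pt -> Prop} {M : R} {pts : seq pt} :
  uniq ks -> convexS S ->
  (forall p, S p -> (forall j, j \in ks -> 0 <= p.2 j) -> p.1 <= M) ->
  (forall p, p \in pts -> S p) ->
  exists2 beta : J -> R, (forall j, 0 <= beta j) &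
    forall p, p \in pts -> lagr beta ks p <= M.
Proof.
elim: ks S pts => [|j ks IH] S pts uniq_ks S_cvx S_le ptsS.
  exists (fun _ => 0) => // p pin; rewrite /lagr big_nil addr0.
  by apply: S_le; [exact: ptsS | move=> j].
case/andP: uniq_ks => j_ks uniq_ks.
have S'_le p : S p /\ 0 <= p.2 j -> (forall j', j' \in ks -> 0 <= p.2 j') -> p.1 <= M.
  by case=> Sp p0 H; apply: S_le => // j'; rewrite in_cons => /predU1P [->|]; auto.
have [b' b'_ge0 b'_le] := IH _ (eliminate j pts) uniq_ks (convexS_slack_ge0 S j S_cvx)
  S'_le (eliminate_in j S_cvx ptsS).
pose u p := lagr b' ks p - M.
have u_nn p : p \in pts -> 0 <= p.2 j -> u p <= 0.
  by move=> pin p0; rewrite /u subr_le0 b'_le // eliminate_nonneg.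
have u_mix p q : p \in pts -> q \in pts -> 0 < p.2 j -> q.2 j < 0 ->
    p.2 j * u q <= q.2 j * u p.
  move=> pin qin gp gq; have := b'_le _ (eliminate_mix j pin qin gp gq).
  by have := lagr_cancel_mix b' ks j p q gp gq; rewrite /u; nra.
have [lam lam_ge0 lam_le] := scalar_multiplier pts u (fun p => p.2 j) u_nn u_mix.
exists (fun k => if k == j then lam else b' k) => [k|p pin]; first by case: ifP.
rewrite /lagr big_cons eqxx (eq_big_seq (fun k => b' k * p.2 k)); last first.
  by move=> k kin; case: eqP => // kj; move: j_ks; rewrite -kj kin.
by have := lam_le p pin; rewrite /u /lagr; lra.
Qed.

End Multipliers.

Local Open Scope classical_set_scope.

Lemma indicator_of_01_distribution {R : realDomainType} {I : finType} (w : I -> R) :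
  (forall i, w i = 0 \/ w i = 1) -> \sum_i w i = 1 ->
  exists i, [forall j, w j == (j == i)%:R].
Proof.
move=> w01 w_sum.
have [i /eqP wi1] : exists i, w i == 1.
  apply/existsP; apply: contraT; rewrite negb_exists => /forallP w_ne1.
  move: w_sum; rewrite big1 => [/eqP|j _]; first by rewrite eq_sym oner_eq0.
  by case: (w01 j) => // wj1; move: (w_ne1 j); rewrite wj1 eqxx.
exists i; apply/forallP => j; have [-> //|ji] := eqVneq j i; first by rewrite wi1.
case: (w01 j) => [-> //|wj1]; move: w_sum.
rewrite (bigD1 i) //= (bigD1 j) /=; last by rewrite ji.
have : 0 <= \sum_(k | (k != i) && (k != j)) w k.
  by apply: sumr_ge0 => k _; case: (w01 k) => ->.
by rewrite wi1 wj1; lra.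
Qed.

Lemma sup_subset {R : realType} {A B : set R} :
  A `<=` B -> A !=set0 -> has_ubound B -> sup A <= sup B.
Proof. by move=> AB A0 B_ub; apply: ge_sup A0 _ => x /AB; exact: ub_le_sup. Qed.

Definition has_base {R : realType} (F : forall P : pomdp R, nat -> vars P -> Prop) :=
  forall P T (x : vars P), F P T x -> base_feas T x.

Lemma Q_has_base {R : realType} : has_base (@Q_feas R). Proof. by move=> ? ? ? []. Qed.
Lemma Qd_has_base {R : realType} : has_base (@Qd_feas R). Proof. by move=> ? ? ? []. Qed.
Lemma QR_has_base {R : realType} : has_base (@QR_feas R). Proof. by move=> ? ? ? []. Qed.
Lemma Rc_has_base {R : realType} : has_base (@Rc_feas R). Proof. by move=> ? ? ? [[]]. Qed.

Section Joint.
Context {R : realType} {W : wcpomdp R} {T : nat}.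
Hypothesis hW : wcpomdp_wf W.

Local Notation C m := (Defs.comp R W m).
Local Notation nr := (nres R W).

Lemma comp_wf m : pomdp_wf (C m). Proof. by case: hW. Qed.

Definition Lag (beta : nat -> 'I_nr -> R) (X : jvars W) : R :=
  objective T X + \sum_(t < T) \sum_(k < nr) beta t k * (budget R W k - usage X t k).

Lemma lagrangianE F beta :
  lagrangian T F beta = sup [set v | exists X, comp_feas T F X /\ v = Lag beta X].
Proof. by []. Qed.

Lemma Lag0 X : Lag (fun _ _ => 0) X = objective T X.
Proof. by rewrite /Lag big1 ?addr0 // => t _; rewrite big1 // => k _; rewrite mul0r. Qed.

Lemma Lag_ge_objective {beta} {X : jvars W} : (forall t k, 0 <= beta t k) -> linking T X ->
  objective T X <= Lag beta X.
Proof.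
move=> beta_ge0 XL; rewrite /Lag lerDl; do 2 (apply: sumr_ge0 => ? _).
by rewrite mulr_ge0 // subr_ge0 XL.
Qed.

Lemma objective_usage_lincomb {I : finType} {w : I -> R} {Y : I -> jvars W} {Z : jvars W} :
  (forall m t s o a, (t < T)%N ->
     x_soa (Z m) t s o a = \sum_i w i * x_soa (Y i m) t s o a) ->
  (forall m t s a s', (t < T)%N ->
     x_sas (Z m) t s a s' = \sum_i w i * x_sas (Y i m) t s a s') ->
  objective T Z = \sum_i w i * objective T (Y i) /\
  (forall t k, (t < T)%N -> usage Z t k = \sum_i w i * usage (Y i) t k).
Proof.
move=> Zsoa Zsas; split.
  rewrite /objective [RHS]sumr_mul_exchange; apply: eq_bigr => t _.
  do 4 (rewrite [RHS]sumr_mul_exchange; apply: eq_bigr => ? _).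
  by rewrite Zsas // mulr_sumr; apply: eq_bigr => i _; rewrite mulrCA.
move=> t k tT; rewrite /usage [RHS]sumr_mul_exchange; apply: eq_bigr => m _.
rewrite [RHS]sumr_mul_exchange; apply: eq_bigr => a _; rewrite sumr_mulCA.
congr (_ * _); do 2 (rewrite [RHS]sumr_mul_exchange; apply: eq_bigr => ? _).
exact: Zsoa.
Qed.

Lemma Lag_lincomb {I : finType} {w : I -> R} {Y : I -> jvars W} {Z : jvars W} beta :
  \sum_i w i = 1 ->
  (forall m t s o a, (t < T)%N ->
     x_soa (Z m) t s o a = \sum_i w i * x_soa (Y i m) t s o a) ->
  (forall m t s a s', (t < T)%N ->
     x_sas (Z m) t s a s' = \sum_i w i * x_sas (Y i m) t s a s') ->
  Lag beta Z = \sum_i w i * Lag beta (Y i).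
Proof.
move=> w_sum Zsoa Zsas; have [Eobj Euse] := objective_usage_lincomb Zsoa Zsas.
rewrite /Lag Eobj; under [RHS]eq_bigr do rewrite mulrDr.
rewrite big_split /=; congr (_ + _).
do 2 (rewrite [RHS]sumr_mul_exchange; apply: eq_bigr => ? _).
rewrite sumr_mulCA Euse //; congr (_ * _).
by under [RHS]eq_bigr do rewrite mulrBr; rewrite sumrB -mulr_suml w_sum mul1r.
Qed.

Lemma Lag_ext (X Y : jvars W) beta :
  (forall m t s o a, (t < T)%N -> x_soa (X m) t s o a = x_soa (Y m) t s o a) ->
  (forall m t s a s', (t < T)%N -> x_sas (X m) t s a s' = x_sas (Y m) t s a s') ->
  Lag beta X = Lag beta Y.
Proof.
move=> XYsoa XYsas.
rewrite (@Lag_lincomb 'I_1 (fun=> 1) (fun=> Y) X beta) ?big_ord1 ?mul1r //.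
  by move=> *; rewrite big_ord1 mul1r XYsoa.
by move=> *; rewrite big_ord1 mul1r XYsas.
Qed.

(* On points satisfying (i)-(iv) all variables lie in [0, 1], so the
   Lagrangian is bounded. *)
Lemma Lag_bounded beta : exists B, forall X : jvars W,
  (forall m, base_feas T (X m)) -> Lag beta X <= B.
Proof.
exists (\sum_(t < T) \sum_(m < ncomp R W) \sum_(s : St R (C m)) \sum_(a : Ac R (C m))
    \sum_(s' : St R (C m)) `|rew R (C m) s a s'| +
  \sum_(t < T) \sum_(k < nr) `|beta t k| * (`|budget R W k| +
    \sum_(m < ncomp R W) \sum_(a : Ac R (C m)) `|Defs.cons R W m a k| *
       (\sum_(s : St R (C m)) \sum_(o : Ob R (C m)) 1))).
move=> X XB; rewrite /Lag; apply: lerD.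
  rewrite /objective; do 5 (apply: ler_sum => ? _).
  apply: le_trans (ler_norm _) _; rewrite normrM -[leRHS]mulr1 ler_wpM2l //.
  by rewrite ger0_norm ?(sas_ge0 (XB _)) ?(sas_le1 (comp_wf _) (XB _)).
do 2 (apply: ler_sum => ? _).
apply: le_trans (ler_norm _) _; rewrite normrM ler_wpM2l //.
apply: le_trans (ler_normB _ _) _; rewrite lerD //.
rewrite /usage; apply: le_trans (ler_norm_sum _ _ _) _; apply: ler_sum => m _.
apply: le_trans (ler_norm_sum _ _ _) _; apply: ler_sum => a _.
rewrite normrM ler_wpM2l //.
do 2 (apply: le_trans (ler_norm_sum _ _ _) _; apply: ler_sum => ? _).
by rewrite ger0_norm ?(soa_ge0 (XB _)) ?(soa_le1 (comp_wf _) (XB _)).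
Qed.

Lemma Lag_has_ub {F} beta : has_base F ->
  has_ubound [set v | exists X, comp_feas T F X /\ v = Lag beta X].
Proof.
move=> FB; have [B LB] := Lag_bounded beta.
by exists B => v [X [XF ->]]; apply: LB => m; apply: FB; exact: XF.
Qed.

Definition jpol := forall m : 'I_(ncomp R W), nat -> Ob R (C m) -> Ac R (C m) -> R.
Definition joint_occ (D : jpol) : jvars W := fun m => occ_vars (D m).
Definition jstoch (D : jpol) := forall m, stoch T (D m).
Definition jdet (D : jpol) :=
  forall m t o a, (t < T)%N -> D m t o a = 0 \/ D m t o a = 1.

Lemma joint_occ_Qd D : jstoch D -> jdet D -> comp_feas T (@Qd_feas R) (joint_occ D).
Proof. by move=> DS D01 m; apply: (occ_Qd (comp_wf m)) => // t o a; exact: D01. Qed.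

(* The decision points, and the policies that are deterministic at one. *)
Definition jkey := {m : 'I_(ncomp R W) & ('I_T * Ob R (C m))%type}.
Definition det_at (D : jpol) (p : jkey) :=
  forall a, D (tag p) (tagged p).1 (tagged p).2 a = 0 \/
            D (tag p) (tagged p).1 (tagged p).2 a = 1.

Definition jfix (D : jpol) m t o a : jpol :=
  @dfwith _ (fun m => nat -> Ob R (C m) -> Ac R (C m) -> R) D m
    (fix_action (D m) t o a).

Lemma jfix_stoch D m t o a : jstoch D -> jstoch (jfix D m t o a).
Proof.
move=> DS m'; have [<-|mm'] := eqVneq m m'; last by rewrite /jfix dfwith_out.
by rewrite /jfix dfwith_in; exact: fix_action_stoch.
Qed.

Lemma jfix_det_here D m (t : 'I_T) o a : det_at (jfix D m t o a) (existT _ m (t, o)).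
Proof. by move=> a' /=; rewrite /jfix dfwith_in /fix_action !eqxx; case: eqP; auto. Qed.

Lemma jfix_det_at D m (t : 'I_T) o a p :
  p != existT _ m (t, o) -> det_at D p -> det_at (jfix D m t o a) p.
Proof.
case: p => m' [t' o'] /= p_ne Dp a'; rewrite /jfix.
have [mm'|mm'] := eqVneq m m'; last by rewrite dfwith_out //; exact: Dp.
subst m'; rewrite dfwith_in /fix_action.
case: andP => [[/eqP tt' /eqP oo']|_]; last exact: Dp.
by move: tt' oo' p_ne => /= /val_inj -> ->; rewrite eqxx.
Qed.

(* Derandomising one decision point does not decrease the Lagrangian: the
   Lagrangian of [D] is the [D m t o]-average of those of the [jfix D m t o a],
   so one of these is at least as large. *)
Lemma derandomize_step beta D m (t : 'I_T) o : jstoch D ->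
  exists a, Lag beta (joint_occ D) <= Lag beta (joint_occ (jfix D m t o a)).
Proof.
move=> DS; have [D_ge0 D_sum] := DS m t (ltn_ord t).
have Lag_avg : Lag beta (joint_occ D) =
    \sum_a D m t o a * Lag beta (joint_occ (jfix D m t o a)).
  apply: Lag_lincomb => [|m' t' *|m' t' *] /=; first exact: D_sum.
  - have [mm'|mm'] := eqVneq m m'; first subst m'.
      by under eq_bigr do rewrite /jfix dfwith_in; rewrite occ_soa_mix_fix.
    by under eq_bigr do rewrite /jfix dfwith_out //; rewrite -mulr_suml D_sum mul1r.
  - have [mm'|mm'] := eqVneq m m'; first subst m'.
      by under eq_bigr do rewrite /jfix dfwith_in; rewrite occ_sas_mix_fix.
    by under eq_bigr do rewrite /jfix dfwith_out //; rewrite -mulr_suml D_sum mul1r.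
have [a0 _] : exists a0 : Ac R (C m), true.
  case: (pickP (fun _ : Ac R (C m) => true)) => [a0 _|none]; first by exists a0.
  by move: (D_sum o); rewrite big_pred0 // => /eqP; rewrite eq_sym oner_eq0.
have [a _ a_max] := @arg_maxP _ _ _ a0 xpredT
  (fun a => Lag beta (joint_occ (jfix D m t o a))) isT.
exists a; rewrite Lag_avg.
apply: (le_trans (y := \sum_a' D m t o a' * Lag beta (joint_occ (jfix D m t o a)))).
  by apply: ler_sum => a' _; apply: ler_wpM2l; [exact: D_ge0 | exact: a_max].
by rewrite -mulr_suml D_sum mul1r.
Qed.

Lemma derandomize beta (l : seq jkey) D : jstoch D ->
  (forall p, p \notin l -> det_at D p) ->
  exists D', [/\ jstoch D', jdet D' & Lag beta (joint_occ D) <= Lag beta (joint_occ D')].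
Proof.
elim: l D => [|[m [t o]] l IH] D DS D_det.
  by exists D; split=> // m t o a tT; exact: (D_det (existT _ m (Ordinal tT, o))).
have [a Lag_le] := derandomize_step beta D m t o DS.
have [|D' [D'S D'_det Lag_le']] := IH (jfix D m t o a) (jfix_stoch D m t o a DS).
  move=> p pl; have [->|p_ne] := eqVneq p (existT _ m (t, o)).
    exact: jfix_det_here.
  by apply: jfix_det_at => //; apply: D_det; rewrite in_cons negb_or p_ne.
by exists D'; split=> //; exact: le_trans Lag_le'.
Qed.

Lemma derandomize_all beta D : jstoch D ->
  exists D', [/\ jstoch D', jdet D' & Lag beta (joint_occ D) <= Lag beta (joint_occ D')].
Proof.
move=> DS; apply: (derandomize beta (enum (predT : {pred jkey})) D DS) => p.
by rewrite mem_enum.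
Qed.

(* The IP is feasible: always play a fixed joint action within the budget. *)
Lemma IP_feasible : exists X : jvars W, comp_feas T (@Qd_feas R) X /\ linking T X.
Proof.
case: hW => _ _ [a0 a0_budget].
pose D0 : jpol := fun m t o a => (a == a0 m)%:R.
have D0S : jstoch D0.
  move=> m t tT; split=> [o a|o]; first exact: ler0n.
  by rewrite /D0 (bigD1 (a0 m)) //= eqxx big1 ?addr0 // => a /negPf ->.
exists (joint_occ D0); split.
  by apply: joint_occ_Qd => // m t o a _; rewrite /D0; case: eqP; auto.
move=> t tT k; apply: le_trans (a0_budget k); rewrite le_eqVlt; apply/orP; left.
apply/eqP; apply: eq_bigr => m _.
have marg a : \sum_s \sum_o x_soa (joint_occ D0 m) t s o a = (a == a0 m)%:R.
  exact: (occ_action_marginal (comp_wf m) (D0S m) t a _ tT (fun=> erefl)).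
under eq_bigr do rewrite marg.
by rewrite (bigD1 (a0 m)) //= eqxx mulr1 big1 ?addr0 // => a /negPf ->; rewrite mulr0.
Qed.

(* On Q every point is the occupancy measure of its own policy, so its
   Lagrangian is that of the joint occupancy measure of its policy. *)
Lemma Q_joint_stoch {X : jvars W} : comp_feas T (@Q_feas R) X ->
  jstoch (fun m => x_del (X m)).
Proof. by move=> XQ m; exact: Q_policy_stoch. Qed.

Lemma Lag_Q_occ {X : jvars W} beta : comp_feas T (@Q_feas R) X ->
  Lag beta X = Lag beta (joint_occ (fun m => x_del (X m))).
Proof.
by move=> XQ; apply: Lag_ext => m t *; [rewrite (Q_soa_occ (XQ m)) | rewrite (Q_sas_occ (XQ m))].
Qed.

(* [z_LR_IP = z_LR_UB]: relaxing Q^d to Q leaves the dual function unchanged,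
   since any point of Q can be derandomised without loss. *)
Lemma lagrangian_Qd_Q beta :
  lagrangian (W:=W) T (@Qd_feas R) beta = lagrangian (W:=W) T (@Q_feas R) beta.
Proof.
have [X0 [X0D _]] := IP_feasible.
have Qd_ne : [set v | exists X, comp_feas T (@Qd_feas R) X /\ v = Lag beta X] !=set0.
  by exists (Lag beta X0), X0.
rewrite !lagrangianE; apply: le_anti; apply/andP; split.
  apply: (sup_subset _ Qd_ne (Lag_has_ub beta Q_has_base)) => v [X [XD ->]].
  by exists X; split=> // m; exact: Qd_Q.
apply: ge_sup => [|v [X [XQ ->]]].
  by exists (Lag beta X0), X0; split=> // m; exact: Qd_Q.
have [D' [D'S D'_det Lag_le]] := derandomize_all beta _ (Q_joint_stoch XQ).
rewrite (Lag_Q_occ beta XQ); apply: le_trans Lag_le _.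
apply: ub_le_sup; first exact: (Lag_has_ub beta Qd_has_base).
by exists (joint_occ D'); split=> //; exact: joint_occ_Qd.
Qed.

Lemma z_UB_le_lagrangian beta : (forall t k, 0 <= beta t k) ->
  z_UB W T <= lagrangian (W:=W) T (@Q_feas R) beta.
Proof.
move=> beta_ge0; have [X0 [X0D X0L]] := IP_feasible.
apply: ge_sup => [|v [X [XQ XL ->]]].
  by exists (objective T X0), X0; split=> // m; exact: Qd_Q.
apply: le_trans (Lag_ge_objective beta_ge0 XL) _.
apply: ub_le_sup; first exact: (Lag_has_ub beta Q_has_base).
by exists X.
Qed.

Lemma lagrangian_lbound :
  exists c, forall beta, (forall t k, 0 <= beta t k) ->
    c <= lagrangian (W:=W) T (@Qd_feas R) beta.
Proof.
have [X0 [X0D X0L]] := IP_feasible.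
exists (objective T X0) => beta beta_ge0; apply: le_trans (Lag_ge_objective beta_ge0 X0L) _.
apply: ub_le_sup; first exact: (Lag_has_ub beta Qd_has_base).
by exists X0.
Qed.

Lemma prog_has_ub {F} : has_base F ->
  has_ubound [set v | exists X : jvars W, [/\ comp_feas T F X, linking T X & v = objective T X]].
Proof.
move=> FB; have [B LB] := Lag_has_ub (fun _ _ => 0) FB.
by exists B => v [X [XF _ ->]]; apply: LB; exists X; rewrite Lag0.
Qed.

Lemma z_Rc_le_z_R : z_Rc W T <= z_R W T.
Proof.
have [X0 [X0D X0L]] := IP_feasible.
apply: (sup_subset _ _ (prog_has_ub QR_has_base)) => [v [X [XRc XL ->]]|].
  by exists X; split=> // m; case: (XRc m).
by exists (objective T X0), X0; split=> // m; exact: (Qd_Rc (comp_wf m)).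
Qed.

(* [z_LR_IP <= z_Rc].  A joint point is mapped to its objective value and
   the slacks of its linking constraints. *)
Local Notation J := ('I_T * 'I_nr)%type.

Definition point (X : jvars W) : @pt R J :=
  (objective T X, [ffun j : J => budget R W j.2 - usage X j.1 j.2]).

Definition jcomb mu (X Y : jvars W) : jvars W := fun m => vcomb mu (X m) (Y m).

Lemma point_jcomb mu X Y : point (jcomb mu X Y) = combp mu (point X) (point Y).
Proof.
pose w b : R := if b then mu else 1 - mu.
pose XY b := if b then X else Y.
have XYsoa m t s o a : (t < T)%N ->
  x_soa (jcomb mu X Y m) t s o a = \sum_b w b * x_soa (XY b m) t s o a.
  by rewrite big_bool.
have XYsas m t s a s' : (t < T)%N ->
  x_sas (jcomb mu X Y m) t s a s' = \sum_b w b * x_sas (XY b m) t s a s'.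
  by rewrite big_bool.
have [Eobj Euse] := objective_usage_lincomb XYsoa XYsas.
rewrite /point /combp Eobj big_bool; congr (_, _).
by apply/ffunP => j; rewrite !ffunE Euse // big_bool /=; ring.
Qed.

Definition Rc_image (p : @pt R J) :=
  exists X, comp_feas T (@Rc_feas R) X /\ p = point X.

Lemma Rc_image_convex : convexS Rc_image.
Proof.
move=> p q mu [X [XRc ->]] [Y [YRc ->]] mu01; exists (jcomb mu X Y).
by rewrite point_jcomb; split=> // m; exact: Rc_feas_convex.
Qed.

Lemma Rc_image_le p : Rc_image p ->
  (forall j, j \in enum {: J} -> 0 <= p.2 j) -> p.1 <= z_Rc W T.
Proof.
move=> [X [XRc ->]] slack_ge0; apply: ub_le_sup; first exact: prog_has_ub Rc_has_base.
exists X; split=> // t tT k.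
by have := slack_ge0 (Ordinal tT, k); rewrite mem_enum ffunE subr_ge0; apply.
Qed.

Definition det_pol :=
  {dffun forall m : 'I_(ncomp R W), {ffun ('I_T * Ob R (C m)) -> Ac R (C m)}}.

Definition det_jpol (pi : det_pol) : jpol := fun m t o a =>
  if insub t is Some t' then (a == pi m (t', o))%:R else 0.

Lemma det_jpolE pi m t o a (tT : (t < T)%N) :
  det_jpol pi m t o a = (a == pi m (Ordinal tT, o))%:R.
Proof. by rewrite /det_jpol insubT. Qed.

Lemma det_jpol_Qd pi : comp_feas T (@Qd_feas R) (joint_occ (det_jpol pi)).
Proof.
apply: joint_occ_Qd => [m t tT|m t o a tT]; rewrite ?det_jpolE; last by case: eqP; auto.
split=> [o a|o]; first by rewrite det_jpolE ler0n.
under eq_bigr do rewrite det_jpolE.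
by rewrite (bigD1 (pi m (Ordinal tT, o))) //= eqxx big1 ?addr0 // => a /negPf ->.
Qed.

Lemma Qd_det_pol {X : jvars W} : comp_feas T (@Qd_feas R) X ->
  exists pi, forall m t, (t < T)%N -> x_del (X m) t = det_jpol pi m t.
Proof.
move=> XD; have row_ind m (x : 'I_T * Ob R (C m)) :
    exists a, [forall a', x_del (X m) x.1 x.2 a' == (a' == a)%:R].
  have [XB X01 _] := XD m; have [_ del_sum _ _ _] := XB x.1 (ltn_ord x.1).
  by apply: indicator_of_01_distribution (del_sum _) => a; exact: X01.
exists [ffun m => [ffun x => xchoose (row_ind m x)]] => m t tT.
apply/funext => o; apply/funext => a; rewrite det_jpolE !ffunE.
by have /forallP /(_ a) /eqP := xchooseP (row_ind m (Ordinal tT, o)).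
Qed.

Lemma Lag_point (c : J -> R) X :
  Lag (fun t k => if insub t is Some t' then c (t', k) else 0) X =
  lagr c (enum {: J}) (point X).
Proof.
rewrite /Lag /lagr big_enum /= pair_bigA /=; congr (_ + _).
by apply: eq_bigr => -[t k] _; rewrite ffunE /= valK.
Qed.

(* Some multipliers bring the dual function below [z_Rc]: apply finite
   Lagrangian duality to the points of the finitely many deterministic
   policies, which lie in the convex image of R^c; every point of Q^d has
   the Lagrangian of one of them. *)
Lemma lagrangian_le_z_Rc : exists2 beta : nat -> 'I_nr -> R,
  (forall t k, 0 <= beta t k) & lagrangian (W:=W) T (@Qd_feas R) beta <= z_Rc W T.
Proof.
pose pts := [seq point (joint_occ (det_jpol pi)) | pi <- enum det_pol].
have ptsRc p : p \in pts -> Rc_image p.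
  move=> /mapP [pi _ ->]; exists (joint_occ (det_jpol pi)); split=> // m.
  exact/(Qd_Rc (comp_wf m))/det_jpol_Qd.
have [c c_ge0 c_le] := finite_lagrange_duality (enum_uniq {: J})
  Rc_image_convex Rc_image_le ptsRc.
pose beta t k := if insub t is Some t' then c (t', k) else 0.
exists beta => [t k|]; first by rewrite /beta; case: insub.
have [X0 [X0D _]] := IP_feasible.
rewrite lagrangianE; apply: ge_sup => [|v [X [XD ->]]]; first by exists (Lag beta X0), X0.
have [pi X_pi] := Qd_det_pol XD.
rewrite (Lag_Q_occ beta (fun m => Qd_Q (XD m))).
have -> : Lag beta (joint_occ (fun m => x_del (X m))) = Lag beta (joint_occ (det_jpol pi)).
  apply: Lag_ext => m t ? ? ? tT; have [soa_eq sas_eq] := occ_agree (X_pi m) t tT.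
  - exact: soa_eq.
  - exact: sas_eq.
by rewrite Lag_point; apply: c_le; apply: map_f; rewrite mem_enum.
Qed.

End Joint.

Theorem mainTheorem7 (R : realType) (W : wcpomdp R) (T : nat) :
  wcpomdp_wf W ->
  z_LR_IP W T = z_LR_UB W T /\
  z_UB W T <= z_LR_IP W T /\
  z_LR_IP W T <= z_Rc W T /\
  z_Rc W T <= z_R W T.
Proof.
move=> hW.
have LR_eq : z_LR_IP W T = z_LR_UB W T.
  rewrite /z_LR_IP /z_LR_UB /lagrangian_value; congr (inf _).
  by apply/seteqP; split=> _ [b [b_ge0 ->]]; exists b; rewrite (lagrangian_Qd_Q hW).
have [c c_le] := lagrangian_lbound (T := T) hW.
have [beta beta_ge0 le_Rc] := lagrangian_le_z_Rc (T := T) hW.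
split=> //; split; last split; last exact: z_Rc_le_z_R.
- rewrite LR_eq; apply: lb_le_inf => [|_ [b [b_ge0 ->]]].
    by exists (lagrangian (W:=W) T (@Q_feas R) (fun _ _ => 0)), (fun _ _ => 0).
  exact: z_UB_le_lagrangian.
- apply: le_trans le_Rc; apply: ge_inf; last by exists beta.
  by exists c => _ [b [b_ge0 ->]]; exact: c_le.
Qed.
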